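(* For every $n\in\mathbb{Z}^+$ we have $$N(1,1,6;2n)=N(1,1,3;n),\qquad t(1,1,6;8n+4)=2t(1,1,3;n),\qquad t(1,1,6;32n+19)=4t(1,1,3;n).$$ Moreover, for every $n\in\mathbb{Z}^+$ with $n\not\equiv 15\pmod{16}$ we have $$t(1,1,6;n)=\begin{cases} 4N(1,1,3;n+1)&\text{if } n\equiv 1,2\pmod 4,\\ 2N(1,1,3;n+1)&\text{if } n\equiv 0\pmod 8,\\ N(1,1,3;n+1)&\text{if } n\equiv 4\pmod 8 \text{ or } n\equiv 19\pmod{32},\\ \frac 85N(1,1,3;n+1)&\text{if } n\equiv 7,11\pmod{16},\\ \frac 43N(1,1,3;n+1)&\text{if } n\equiv 3\pmod{32}.\end{cases}$$
   Context: $\mathbb{Z}^+$ is the set of positive integers. For $a,b,c\in\mathbb{Z}^+$ and nonnegative integer $n$, $N(a,b,c;n)$ denotes the number of triples $(x,y,z)\in\mathbb{Z}^3$ with $n=ax^2+by^2+cz^2$, and $t(a,b,c;n)$ denotes the number of triples $(x,y,z)\in\mathbb{Z}^3$ with $n=a\frac{x(x+1)}2+b\frac{y(y+1)}2+c\frac{z(z+1)}2$. *)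

From mathcomp Require Import all_boot all_order all_algebra.
Set Implicit Arguments. Unset Strict Implicit. Unset Printing Implicit Defensive.
Import Order.TTheory GRing.Theory Num.Theory.
Local Open Scope ring_scope.

Definition zbox (m : nat) : seq int :=
  [seq (i%:Z - m%:Z) | i <- iota 0 (2 * m + 1)].

(* Number of (x,y,z) in Z^3 with n = a x^2 + b y^2 + c z^2.
   For a,b,c >= 1 every solution satisfies |x|,|y|,|z| <= n, so
   enumerating the box [-n,n]^3 counts all of Z^3. *)
Definition N (a b c n : nat) : nat :=
  (\sum_(x <- zbox n) \sum_(y <- zbox n) \sum_(z <- zbox n)
     nat_of_bool ((a%:Z * x ^+ 2 + b%:Z * y ^+ 2 + c%:Z * z ^+ 2 == n%:Z)%R))%N.

Definition tri (x : int) : int := ((x * (x + 1)) %/ 2)%Z.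

(* Number of (x,y,z) in Z^3 with n = a T(x) + b T(y) + c T(z).
   For a,b,c >= 1 every solution has |x|,|y|,|z| <= n+1 (since
   T(x) > n whenever |x| >= n+2), so the box [-(n+1),n+1]^3 suffices. *)
Definition t (a b c n : nat) : nat :=
  (\sum_(x <- zbox n.+1) \sum_(y <- zbox n.+1) \sum_(z <- zbox n.+1)
     nat_of_bool ((a%:Z * tri x + b%:Z * tri y + c%:Z * tri z == n%:Z)%R))%N.

From mathcomp Require Import all_boot all_order all_algebra.
Import Order.TTheory GRing.Theory Num.Theory.
From mathcomp Require Import zify ring lra.

(* Every count is reduced to r(m) = #{(x,y,z) : x^2 + y^2 + 3z^2 = m} and to r'(m), the
   number of those solutions with x + z odd (r113 m predT and r113 m oddxz below), by
   explicit bijections of lattice points: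
   (x,y,z) |-> (x+y+1, x-y, 2z+1) identifies t(1,1,6;n) with the solutions of
   x^2 + y^2 + 3z^2 = 4(n+1) having x + y odd, and (x,y,z) |-> (2x+1, 2y+1, 2z+1) identifies
   t(1,1,3;n) with the all-odd solutions for 8n+5.  Squares modulo 8 decide which parity
   patterns occur, and solutions with x, z odd are transported through the factorisation
   x + z sqrt(-3) = (a + b sqrt(-3))(1 +- sqrt(-3)), a factor of norm 4.  This yields
   t(1,1,6;n) = 4r'(n+1), t(1,1,3;n) = 2r'(8n+5), r(4m) = r(m) + 4r'(m), r'(4m) = 2r'(m),
   and r(m) = r'(m), 2r'(m), 4r'(m) for m = 2,3 (mod 4), 1 (mod 8), 5 (mod 8); the theorem
   combines these identities. *)

Set Implicit Arguments. Unset Strict Implicit. Unset Printing Implicit Defensive.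
Local Open Scope ring_scope.

Definition triple := (int * int * int)%type.

Definition cube (B : nat) : seq triple :=
  [seq (p, z) | p <- [seq (x, y) | x <- zbox B, y <- zbox B], z <- zbox B].

Definition ncube (B : nat) (P : pred triple) : nat := count P (cube B).

Lemma mem_zbox B x : (x \in zbox B) = (- B%:Z <= x <= B%:Z).
Proof.
apply/mapP/idP => [[i]|xB]; first by rewrite mem_iota => /andP[_ iB] ->; lia.
by exists (absz (x + B%:Z)); [rewrite mem_iota|]; lia.
Qed.

Lemma uniq_zbox B : uniq (zbox B).
Proof. by rewrite map_inj_uniq ?iota_uniq // => i j; lia. Qed.

Lemma mem_cube B x y z : ((x, y, z) \in cube B) =
  [&& - B%:Z <= x <= B%:Z, - B%:Z <= y <= B%:Z & - B%:Z <= z <= B%:Z].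
Proof.
rewrite -!mem_zbox; apply/allpairsP/and3P => [[[p w] /= [pB zB [pE ->]]]|[xB yB zB]].
  by move: pB; rewrite -pE => /allpairsP[[a b] /= [xB yB [-> ->]]].
by exists ((x, y), z); split=> //; apply/allpairsP; exists (x, y).
Qed.

Lemma uniq_cube B : uniq (cube B).
Proof. by rewrite !allpairs_uniq ?uniq_zbox // => -[? ?] [? ?]. Qed.

Lemma sum_zbox3 B (F : int -> int -> int -> bool) :
  (\sum_(x <- zbox B) \sum_(y <- zbox B) \sum_(z <- zbox B) F x y z)%N =
  ncube B (fun '(x, y, z) => F x y z).
Proof. by rewrite /ncube -sumn_count sumnE big_map !big_allpairs. Qed.

Lemma ncube_le B1 B2 (P1 P2 : pred triple) (f g : triple -> triple) :
  (forall v, P1 v -> P2 (f v) /\ g (f v) = v) -> (forall v, P2 v -> v \in cube B2) ->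
  (ncube B1 P1 <= ncube B2 P2)%N.
Proof.
move=> fP P2B; rewrite /ncube -!size_filter -(size_map f).
apply: uniq_leq_size => [|u /mapP[v]].
  rewrite map_inj_in_uniq ?filter_uniq ?uniq_cube //.
  by apply: (can_in_inj (g := g)) => v; rewrite mem_filter => /andP[/fP[]].
rewrite mem_filter => /andP[/fP[P2fv _] _] ->.
by rewrite mem_filter P2fv P2B.
Qed.

Lemma ncube_bij B1 B2 (P1 P2 : pred triple) (f g : triple -> triple) :
  (forall v, P1 v -> v \in cube B1) -> (forall v, P2 v -> v \in cube B2) ->
  (forall v, P1 v -> P2 (f v) /\ g (f v) = v) ->
  (forall w, P2 w -> P1 (g w) /\ f (g w) = w) ->
  ncube B1 P1 = ncube B2 P2.
Proof.
move=> P1B P2B fP gP; apply/eqP; rewrite eqn_leq.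
by rewrite (ncube_le _ fP P2B) (ncube_le _ gP P1B).
Qed.

Lemma ncube_split B (P c : pred triple) :
  ncube B P = (ncube B (fun v => P v && c v) + ncube B (fun v => P v && ~~ c v))%N.
Proof. by rewrite /ncube; elim: (cube B) => //= v s ->; case: (P v) (c v) => [] []; lia. Qed.

Definition oddz (x : int) : bool := (x %% 2 == 1)%Z.

Lemma sqrz_mod (x : int) :
  ((x %% 2 = 0)%Z /\ (x ^+ 2 %% 4 = 0)%Z) \/ ((x %% 2 = 1)%Z /\ (x ^+ 2 %% 8 = 1)%Z).
Proof.
have [k [r [-> r03]]] : exists k r, x = 4 * k + r /\ 0 <= r < 4.
  by exists (x %/ 4)%Z, (x %% 4)%Z; lia.
have -> : (4 * k + r) ^+ 2 = 8 * (2 * k ^+ 2 + k * r) + r ^+ 2 by ring.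
have : r = 0 \/ r = 1 \/ r = 2 \/ r = 3 by lia.
by case=> [|[|[|]]] ->; lia.
Qed.

Definition q113 (v : triple) : int := let: (x, y, z) := v in x ^+ 2 + y ^+ 2 + 3 * z ^+ 2.

Definition r113 (m : nat) (P : pred triple) : nat :=
  ncube m (fun v => (q113 v == m%:Z) && P v).

Definition oddxz : pred triple := fun '(x, _, z) => oddz (x + z).
Definition oddxz_eveny : pred triple := fun '(x, y, z) => [&& oddz x, oddz z & ~~ oddz y].

(* lia only succeeds once the parity cases of the three squares have been split. *)
Ltac sqr_mod_lia x y z :=
  case: (sqrz_mod x) => [[? ?]|[? ?]]; case: (sqrz_mod y) => [[? ?]|[? ?]];
  case: (sqrz_mod z) => [[? ?]|[? ?]]; unfold q113, oddxz, oddxz_eveny, oddz in *; lia.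

Lemma q113_cube m v : q113 v = m%:Z -> v \in cube m.
Proof. by case: v => [[x y] z] /= q; rewrite mem_cube; nia. Qed.

Lemma r113_cube m (P : pred triple) v : (q113 v == m%:Z) && P v -> v \in cube m.
Proof. by case/andP => /eqP /q113_cube. Qed.

Lemma eq_r113 m (P Q : pred triple) :
  (forall v, q113 v = m%:Z -> P v = Q v) -> r113 m P = r113 m Q.
Proof. by move=> PQ; apply: eq_count => v; case: eqP => //= /PQ. Qed.

Lemma r113_split m (P c : pred triple) :
  r113 m P = (r113 m (fun v => P v && c v) + r113 m (fun v => P v && ~~ c v))%N.
Proof. by rewrite /r113 (ncube_split _ _ c); congr addn; apply: eq_count => v; rewrite andbA. Qed.

Lemma r113_invariant m (P : pred triple) (s : triple -> triple) :
  involutive s -> (forall v, q113 (s v) = q113 v) -> r113 m (P \o s) = r113 m P.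
Proof.
move=> sK qs; apply: (ncube_bij (f := s) (g := s)).
- exact: r113_cube.
- exact: r113_cube.
- by move=> v; rewrite /= sK qs.
- by move=> v; rewrite /= -{1}(sK v) qs sK.
Qed.

Definition swapxy (v : triple) : triple := let: (x, y, z) := v in (y, x, z).
Definition flipz (v : triple) : triple := let: (x, y, z) := v in (x, y, - z).

Lemma r113_swapxy m (P : pred triple) : r113 m (P \o swapxy) = r113 m P.
Proof. by apply: r113_invariant => [[[x y] z]|[[x y] z]] //=; ring. Qed.

Lemma r113_flipz m (P : pred triple) : r113 m (P \o flipz) = r113 m P.
Proof. by apply: r113_invariant => [[[x y] z]|[[x y] z]] /=; rewrite ?opprK //; ring. Qed.

(* x + z sqrt(-3) = (a + b sqrt(-3))(1 + sqrt(-3)) with a, b integral iff x = z (mod 4). *)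
Lemma r113_eisenstein k (P : pred int) :
  r113 k (fun '(x, y, z) => [&& oddz x, oddz z, ((x - z) %% 4 == 0)%Z & P y]) =
  ncube k (fun '(a, y, b) => [&& 4 * (a ^+ 2 + 3 * b ^+ 2) + y ^+ 2 == k%:Z, oddz (a + b) & P y]).
Proof.
have normM (a b : int) : (a - 3 * b) ^+ 2 + 3 * (a + b) ^+ 2 = 4 * (a ^+ 2 + 3 * b ^+ 2).
  by ring.
have divK (a b : int) :
    ((a - 3 * b + 3 * (a + b)) %/ 4)%Z = a /\ ((a + b - (a - 3 * b)) %/ 4)%Z = b.
  by lia.
apply: (ncube_bij (f := fun '(x, y, z) => ((x + 3 * z) %/ 4, y, (z - x) %/ 4)%Z)
                  (g := fun '(a, y, b) => (a - 3 * b, y, a + b))).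
- exact: r113_cube.
- by move=> [[a y] b] /and3P[/eqP q _ _]; rewrite mem_cube; nia.
- move=> [[x y] z] /andP[/eqP q /and4P[ox oz xz Py]].
  have [a [b [xE zE]]] : exists a b, x = a - 3 * b /\ z = a + b.
    by exists ((x + 3 * z) %/ 4)%Z, ((z - x) %/ 4)%Z; move: ox oz xz; rewrite /oddz; lia.
  move: q oz; rewrite {}xE {}zE /= addrAC normM; case: (divK a b) => -> -> -> oz.
  by rewrite eqxx oz Py.
- move=> [[a y] b] /and3P[/eqP q oab Py] /=.
  case: (divK a b) => -> ->; rewrite addrAC normM q eqxx oab Py; split=> //.
  by move: oab; rewrite /oddz; lia.
Qed.

Lemma r113_oddx_oddz k (P : pred int) :
  r113 k (fun '(x, y, z) => [&& oddz x, oddz z & P y]) =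
  (2 * ncube k (fun '(a, y, b) =>
         [&& 4 * (a ^+ 2 + 3 * b ^+ 2) + y ^+ 2 == k%:Z, oddz (a + b) & P y]%R))%N.
Proof.
rewrite (r113_split _ _ (fun '(x, _, z) => ((x - z) %% 4 == 0)%Z)).
rewrite -r113_eisenstein mul2n -addnn; congr addn.
  by apply: eq_r113 => -[[x y] z] _ /=; case: (P y); rewrite ?andbT ?andbF ?andbA.
(* z |-> -z exchanges the classes x = z and x = -z (mod 4). *)
rewrite -[RHS]r113_flipz; apply: eq_r113 => -[[x y] z] _ /=.
by case: (P y); rewrite ?andbT ?andbF //; rewrite /oddz; lia.
Qed.

Lemma r113_mul4_oddxz_eveny m : r113 (4 * m)%N oddxz_eveny = (2 * r113 m oddxz)%N.
Proof.
rewrite /oddxz_eveny r113_oddx_oddz; congr muln.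
apply: (ncube_bij (f := fun '(a, y, b) => (a, y %/ 2, b)%Z) (g := fun '(x, y, z) => (x, 2 * y, z))).
- by move=> [[a y] b] /and3P[/eqP q _ _]; rewrite mem_cube; nia.
- exact: r113_cube.
- move=> [[a y] b] /and3P[/eqP q oab ey] /=; rewrite oab andbT.
  have [c yE] : exists c, y = 2 * c by exists (y %/ 2)%Z; move: ey; rewrite /oddz; lia.
  rewrite {}yE mulKz // in q *; split=> //; apply/eqP; lia.
- move=> [[x y] z] /= /andP[/eqP q oxz]; rewrite mulKz // oxz /= /oddz.
  by split=> //; apply/andP; split; [apply/eqP|]; lia.
Qed.

Lemma r113_mul4_oddxy m :
  r113 (4 * m)%N (fun '(x, y, _) => oddz (x + y)) = (4 * r113 m oddxz)%N.
Proof.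
transitivity (r113 (4 * m)%N oddxz_eveny + r113 (4 * m)%N (oddxz_eveny \o swapxy))%N.
  rewrite (r113_split _ _ (fun '(x, _, _) => oddz x)).
  by congr addn; apply: eq_r113 => -[[x y] z] /= q; sqr_mod_lia x y z.
by rewrite r113_swapxy r113_mul4_oddxz_eveny -mulnDl.
Qed.

Lemma r113_mul4_even m :
  r113 (4 * m)%N (fun '(x, y, z) => [&& ~~ oddz x, ~~ oddz y & ~~ oddz z]) = r113 m predT.
Proof.
apply: (ncube_bij (f := fun '(x, y, z) => (x %/ 2, y %/ 2, z %/ 2)%Z)
                  (g := fun '(x, y, z) => (2 * x, 2 * y, 2 * z))).
- exact: r113_cube.
- exact: r113_cube.
- move=> [[x y] z] /= /andP[/eqP q]; rewrite /oddz => /and3P[ex ey ez].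
  have [a [b [c [xE yE zE]]]] : exists a b c, [/\ x = 2 * a, y = 2 * b & z = 2 * c].
    by exists (x %/ 2)%Z, (y %/ 2)%Z, (z %/ 2)%Z; split; lia.
  by subst x y z; rewrite !mulKz // andbT; split=> //; apply/eqP; lia.
- move=> [[x y] z] /= /andP[/eqP q _]; rewrite !mulKz // /oddz.
  by split=> //; apply/andP; split; [apply/eqP|]; lia.
Qed.

Lemma r113_mul4 m : r113 (4 * m)%N predT = (r113 m predT + 4 * r113 m oddxz)%N.
Proof.
rewrite (r113_split _ _ (fun '(x, y, _) => oddz (x + y))) addnC.
rewrite -r113_mul4_oddxy -r113_mul4_even.
by congr addn; apply: eq_r113 => -[[x y] z] /= q; sqr_mod_lia x y z.
Qed.

Lemma r113_mul4_oddxz m : r113 (4 * m)%N oddxz = (2 * r113 m oddxz)%N.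
Proof.
rewrite -r113_mul4_oddxz_eveny -[RHS]r113_swapxy.
by apply: eq_r113 => -[[x y] z] /= q; sqr_mod_lia x y z.
Qed.

Lemma r113_oddxz_mod4 m : (m %% 4 = 2 \/ m %% 4 = 3)%N -> r113 m oddxz = r113 m predT.
Proof. by move=> m23; apply: eq_r113 => -[[x y] z] /= q; sqr_mod_lia x y z. Qed.

Lemma r113_mod8_1 m : (m %% 8 = 1)%N -> r113 m predT = (2 * r113 m oddxz)%N.
Proof.
move=> m1; rewrite (r113_split _ _ oddxz) mul2n -addnn; congr addn.
rewrite -[RHS]r113_swapxy.
by apply: eq_r113 => -[[x y] z] /= q; sqr_mod_lia x y z.
Qed.

Lemma r113_odd_mod8_5 m : (m %% 8 = 5)%N ->
  r113 m (fun '(x, y, z) => [&& oddz x, oddz z & oddz y]) = (2 * r113 m oddxz)%N.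
Proof.
move=> m5; rewrite r113_oddx_oddz; congr muln.
apply: (ncube_bij (f := fun '(a, y, b) => (y, 2 * a, 2 * b))
                  (g := fun '(x, y, z) => (y %/ 2, x, z %/ 2)%Z)).
- by move=> [[a y] b] /and3P[/eqP q _ _]; rewrite mem_cube; nia.
- exact: r113_cube.
- move=> [[a y] b] /and3P[/eqP q oab oy] /=; rewrite !mulKz //.
  by split=> //; apply/andP; split; [apply/eqP|]; move: oy; rewrite /oddz; lia.
- move=> [[x y] z] /= /andP[/eqP q oxz].
  have [ox [a [b [yE zE]]]] : oddz x /\ exists a b, y = 2 * a /\ z = 2 * b.
    split; last by exists (y %/ 2)%Z, (z %/ 2)%Z; split; sqr_mod_lia x y z.
    by sqr_mod_lia x y z.
  subst y z; rewrite !mulKz // ox andbT; split=> //; apply/andP; split.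
    by apply/eqP; lia.
  by move: oxz ox; sqr_mod_lia a x b.
Qed.

Lemma r113_mod8_5 m : (m %% 8 = 5)%N -> r113 m predT = (4 * r113 m oddxz)%N.
Proof.
move=> m5.
transitivity (r113 m oddxz + (r113 m (fun '(x, y, z) => [&& oddz x, oddz z & oddz y]) +
                              r113 m (oddxz \o swapxy)))%N.
  rewrite (r113_split _ _ oddxz) [X in (_ + X = _)%N](r113_split _ _ (fun '(_, _, z) => oddz z)).
  by congr (_ + (_ + _))%N; apply: eq_r113 => -[[x y] z] /= q; sqr_mod_lia x y z.
by rewrite r113_odd_mod8_5 // r113_swapxy; lia.
Qed.

Lemma mul2_tri x : 2 * tri x = x * (x + 1).
Proof.
rewrite /tri (_ : x * (x + 1) = x ^+ 2 + x); last by ring.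
by case: (sqrz_mod x) => [[? ?]|[? ?]]; lia.
Qed.

Lemma tri_bounds x : 0 <= tri x /\ - tri x - 1 <= x <= tri x.
Proof. by have := mul2_tri x; nia. Qed.

Lemma N_ncube a b c n : N a b c n =
  ncube n (fun '(x, y, z) => a%:Z * x ^+ 2 + b%:Z * y ^+ 2 + c%:Z * z ^+ 2 == n%:Z).
Proof. exact: sum_zbox3. Qed.

Lemma t_ncube a b c n : t a b c n =
  ncube n.+1 (fun '(x, y, z) => a%:Z * tri x + b%:Z * tri y + c%:Z * tri z == n%:Z).
Proof. exact: sum_zbox3. Qed.

Lemma N113E m : N 1 1 3 m = r113 m predT.
Proof. by rewrite N_ncube; apply: eq_count => -[[x y] z] /=; rewrite !mul1r andbT. Qed.

Lemma N116_double n : N 1 1 6 (2 * n)%N = N 1 1 3 n.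
Proof.
rewrite N_ncube N113E.
have divK (u w : int) : ((u + w + (u - w)) %/ 2)%Z = u /\ ((u + w - (u - w)) %/ 2)%Z = w.
  by lia.
apply: (ncube_bij (f := fun '(x, y, z) => ((x + y) %/ 2, (x - y) %/ 2, z)%Z)
                  (g := fun '(u, w, z) => (u + w, u - w, z))).
- by move=> [[x y] z] /eqP q; rewrite mem_cube; nia.
- exact: r113_cube.
- move=> [[x y] z] /= /eqP q.
  have [u [w [xE yE]]] : exists u w, x = u + w /\ y = u - w.
    exists ((x + y) %/ 2)%Z, ((x - y) %/ 2)%Z.
    by case: (sqrz_mod x) => [[? ?]|[? ?]]; case: (sqrz_mod y) => [[? ?]|[? ?]]; lia.
  by subst x y; case: (divK u w) => -> ->; split=> //; apply/eqP; lia.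
- move=> [[u w] z] /= /andP[/eqP q _].
  by case: (divK u w) => -> ->; split=> //; apply/eqP; lia.
Qed.

Lemma t116E n : t 1 1 6 n = (4 * r113 n.+1 oddxz)%N.
Proof.
rewrite t_ncube -r113_mul4_oddxy.
have qE (x y z : int) : (x + y + 1) ^+ 2 + (x - y) ^+ 2 + 3 * (2 * z + 1) ^+ 2 =
    2 * (2 * tri x) + 2 * (2 * tri y) + 12 * (2 * tri z) + 4.
  by rewrite !mul2_tri; ring.
have divK (x y z : int) : [/\ ((x + y + 1 + (x - y) - 1) %/ 2)%Z = x,
    ((x + y + 1 - (x - y) - 1) %/ 2)%Z = y & ((2 * z + 1 - 1) %/ 2)%Z = z].
  by split; lia.
apply: (ncube_bij (f := fun '(x, y, z) => (x + y + 1, x - y, 2 * z + 1))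
           (g := fun '(u, w, s) => ((u + w - 1) %/ 2, (u - w - 1) %/ 2, (s - 1) %/ 2)%Z)).
- move=> [[x y] z] /eqP q; rewrite mem_cube.
  by case: (tri_bounds x) (tri_bounds y) (tri_bounds z); lia.
- exact: r113_cube.
- move=> [[x y] z] /= /eqP q; case: (divK x y z) => -> -> ->; rewrite qE.
  by split=> //; apply/andP; split; [apply/eqP|rewrite /oddz]; lia.
- move=> [[u w] s] /= /andP[/eqP q ouw].
  have [x [y [z [uE wE sE]]]] : exists x y z, [/\ u = x + y + 1, w = x - y & s = 2 * z + 1].
    exists ((u + w - 1) %/ 2)%Z, ((u - w - 1) %/ 2)%Z, ((s - 1) %/ 2)%Z.
    by split; sqr_mod_lia u w s.
  subst u w s; case: (divK x y z) => -> -> ->; split=> //.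
  by apply/eqP; move: q; rewrite qE; lia.
Qed.

Lemma t113E n : t 1 1 3 n = (2 * r113 (8 * n + 5) oddxz)%N.
Proof.
rewrite t_ncube -r113_odd_mod8_5; last by lia.
have qE (x y z : int) : (2 * x + 1) ^+ 2 + (2 * y + 1) ^+ 2 + 3 * (2 * z + 1) ^+ 2 =
    4 * (2 * tri x) + 4 * (2 * tri y) + 12 * (2 * tri z) + 5.
  by rewrite !mul2_tri; ring.
have divK (x : int) : ((2 * x + 1 - 1) %/ 2)%Z = x by lia.
apply: (ncube_bij (f := fun '(x, y, z) => (2 * x + 1, 2 * y + 1, 2 * z + 1))
           (g := fun '(x, y, z) => ((x - 1) %/ 2, (y - 1) %/ 2, (z - 1) %/ 2)%Z)).
- move=> [[x y] z] /eqP q; rewrite mem_cube.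
  by case: (tri_bounds x) (tri_bounds y) (tri_bounds z); lia.
- exact: r113_cube.
- move=> [[x y] z] /= /eqP q; rewrite !divK qE.
  by split=> //; apply/andP; split; [apply/eqP|rewrite /oddz]; lia.
- move=> [[u w] s] /= /andP[/eqP q /and3P[ou os ow]].
  have [x [y [z [uE wE sE]]]] : exists x y z, [/\ u = 2 * x + 1, w = 2 * y + 1 & s = 2 * z + 1].
    exists ((u - 1) %/ 2)%Z, ((w - 1) %/ 2)%Z, ((s - 1) %/ 2)%Z.
    by move: ou os ow; rewrite /oddz; split; lia.
  subst u w s; rewrite !divK; split=> //.
  by apply/eqP; move: q; rewrite qE; lia.
Qed.

Local Close Scope ring_scope.

Theorem theorem3p1 :
  (forall n : nat, 0 < n ->
     [/\ N 1 1 6 (2 * n) = N 1 1 3 n,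
         t 1 1 6 (8 * n + 4) = 2 * t 1 1 3 n
       & t 1 1 6 (32 * n + 19) = 4 * t 1 1 3 n]) /\
  (forall n : nat, 0 < n -> n %% 16 != 15 ->
     let T := ((t 1 1 6 n)%:R : rat)%R in
     let M := ((N 1 1 3 n.+1)%:R : rat)%R in
     [/\ (n %% 4 == 1) || (n %% 4 == 2) -> T = (4 * M)%R,
         n %% 8 == 0 -> T = (2 * M)%R,
         (n %% 8 == 4) || (n %% 32 == 19) -> T = M,
         (n %% 16 == 7) || (n %% 16 == 11) -> T = ((8 / 5) * M)%R
       & n %% 32 == 3 -> T = ((4 / 3) * M)%R]).
Proof.
split=> [n _ | n _ _ T M].
  rewrite N116_double !t116E t113E; split=> //.
    by rewrite (_ : (8 * n + 4).+1 = 8 * n + 5); lia.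
  by rewrite (_ : (32 * n + 19).+1 = 4 * (8 * n + 5)) ?r113_mul4_oddxz; lia.
rewrite {}/T {}/M t116E N113E.
have [k kE] : exists k, n.+1 = 4 * k + n.+1 %% 4 by exists (n.+1 %/ 4); lia.
have mul4E : n.+1 %% 4 = 0 ->
    r113 n.+1 oddxz = 2 * r113 k oddxz /\ r113 n.+1 predT = r113 k predT + 4 * r113 k oddxz.
  by move=> n1_0; rewrite kE n1_0 addn0 r113_mul4 r113_mul4_oddxz.
split=> [/orP n12 | n0 | /orP[n4 | n19] | /orP n711 | n3].
- by rewrite r113_oddxz_mod4; [rewrite natrM | lia].
- by rewrite r113_mod8_1; [rewrite !natrM; lra | lia].
- by rewrite r113_mod8_5; [| lia].
- case: mul4E => [|-> ->]; first lia.
  by rewrite r113_mod8_5; [rewrite !(natrD, natrM); lra | lia].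
- case: mul4E => [|-> ->]; first lia.
  by rewrite r113_oddxz_mod4; [rewrite !(natrD, natrM); lra | lia].
- case: mul4E => [|-> ->]; first lia.
  by rewrite r113_mod8_1; [rewrite !(natrD, natrM); lra | lia].
Qed.
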